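(* Let $f\in L^1((0,\infty))$ and define, for $x>0$, $$\mathcal{H}f(x)=\frac{1}{x}\int_0^x f(t)\,dt-\frac{1}{1+x}\int_0^\infty f(t)\,dt.$$ If $$\int_0^\infty |f(t)|\left[\ln\left(1+\frac{1}{t}\right)+\ln(1+t)\right]dt<\infty,$$ then $\mathcal{H}f\in L^1((0,\infty))$. Conversely, if $f\in L^1((0,\infty))$ is non-negative and $\mathcal{H}f\in L^1((0,\infty))$, then $\int_0^\infty f(t)\left[\ln\left(1+\frac{1}{t}\right)+\ln(1+t)\right]dt<\infty$.
   Context: $L^1((0,\infty))$ denotes the space of measurable functions $f$ on $(0,\infty)$ with $\int_0^\infty |f(x)|\,dx<\infty$. *)

From mathcomp Require Import all_boot all_order all_algebra.
From mathcomp Require Import all_classical all_reals all_analysis.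
Import Order.TTheory GRing.Theory Num.Theory.
Local Open Scope classical_set_scope.
Local Open Scope ring_scope.

Definition pos_dom (R : realType) : set R := `]0, +oo[%classic.

Definition L1pos (R : realType) (f : R -> R) : Prop :=
  (@lebesgue_measure R).-integrable (pos_dom R) (EFin \o f).

Definition hardy_op (R : realType) (f : R -> R) (x : R) : R :=
  x^-1 * Rintegral (@lebesgue_measure R) `]0, x]%classic f
  - (1 + x)^-1 * Rintegral (@lebesgue_measure R) (pos_dom R) f.

Definition log_weight (R : realType) (t : R) : R :=
  ln (1 + t^-1) + ln (1 + t).

Arguments L1pos {R} f.
Arguments hardy_op {R} f x.
Arguments log_weight {R} t.

From mathcomp Require Import all_boot all_order all_algebra.
From mathcomp Require Import all_classical all_reals all_analysis.
From mathcomp Require Import ring lra measurable_realfun.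
Import Order.TTheory GRing.Theory Num.Theory.
Import numFieldNormedType.Exports.
Local Open Scope classical_set_scope.
Local Open Scope ring_scope.

(* Write F(x) = int_0^x f and G(x) = int_x^oo f, so that for x > 0
     Hf(x) = F(x) / (x (1 + x)) - G(x) / (1 + x).
   Since int_t^oo dx / (x (1 + x)) = ln (1 + 1/t) and int_0^t dx / (1 + x) = ln (1 + t),
   Tonelli gives, for g >= 0,
     int_0^oo (int_0^x g) / (x (1 + x)) dx = int_0^oo g(t) ln (1 + 1/t) dt,
     int_0^oo (int_x^oo g) / (1 + x) dx = int_0^oo g(t) ln (1 + t) dt.
   Applied to g = |f|, the triangle inequality bounds int |Hf| by the weighted
   norm of f.  Conversely, for f >= 0 the first term F / (x (1 + x)) is at most
   |Hf| + int f on (0, 1] and at most (int f) / (x (1 + x)) on (1, oo), hence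
   integrable; then G / (1 + x) <= |Hf| + F / (x (1 + x)) is integrable too. *)

Lemma measurable_bool_set d (T : measurableType d) (P : T -> bool) :
  measurable_fun setT P -> measurable [set x | P x].
Proof. by move=> mP; have := mP measurableT [set true] I; rewrite setTI preimage_true. Qed.

Section section_integral_swap.
Local Open Scope ereal_scope.
Context {d1 d2} {T1 : measurableType d1} {T2 : measurableType d2} {R : realType}.
Variables (m1 : {sigma_finite_measure set T1 -> \bar R})
          (m2 : {sigma_finite_measure set T2 -> \bar R}).
Variables (D1 : set T1) (D2 : set T2) (A : set (T1 * T2)).
Variables (a : T1 -> \bar R) (h : T2 -> \bar R).
Hypotheses (mD1 : measurable D1) (mD2 : measurable D2) (mA : measurable A).
Hypothesis AD : A `<=` D1 `*` D2.
Hypotheses (ma : measurable_fun D1 a) (mh : measurable_fun D2 h).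
Hypotheses (a0 : forall x, D1 x -> 0 <= a x) (h0 : forall y, D2 y -> 0 <= h y).

Let k := (fun z : T1 * T2 => a z.1 * h z.2) \_ A.

Let k_ge0 z : 0 <= k z.
Proof.
rewrite /k patchE; case: ifPn => // /set_mem /AD[/= D1z D2z].
by rewrite mule_ge0 ?a0 ?h0.
Qed.

Let mk : measurable_fun setT k.
Proof.
have mfst : measurable_fun A (a \o fst).
  apply: (measurable_comp mD1) ma (measurable_funTS measurable_fst).
  by move=> _ [z /AD[? _] <-].
have msnd : measurable_fun A (h \o snd).
  apply: (measurable_comp mD2) mh (measurable_funTS measurable_snd).
  by move=> _ [z /AD[_ ?] <-].
exact: (measurable_restrictT _ mA).1 (emeasurable_funM mfst msnd).
Qed.

Let xsectionE x : \int[m2]_y k (x, y) = \int[m2]_(y in xsection A x) (a x * h y).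
Proof.
rewrite [RHS]integral_mkcond; apply: eq_integral => y _.
by rewrite /k !patchE mem_xsection.
Qed.

Let ysectionE y : \int[m1]_x k (x, y) = \int[m1]_(x in ysection A y) (h y * a x).
Proof.
rewrite [RHS]integral_mkcond; apply: eq_integral => x _.
by rewrite /k !patchE mem_ysection muleC.
Qed.

Lemma integral_xsection_swap :
  \int[m1]_(x in D1) (a x * \int[m2]_(y in xsection A x) h y) =
  \int[m2]_(y in D2) (h y * \int[m1]_(x in ysection A y) a x).
Proof.
transitivity (\int[m1]_x \int[m2]_y k (x, y)).
  rewrite integral_mkcond; apply: eq_integral => x _; rewrite patchE xsectionE.
  case: ifPn => [/set_mem D1x|D1x].
    rewrite ge0_integralZl ?a0//; first exact: measurable_xsection.
      apply: measurable_funS mh => //; first by move=> y /xsectionP /AD[].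
    by move=> y /xsectionP /AD[_ /h0].
  rewrite (_ : xsection A x = set0) ?integral_set0//.
  by apply/seteqP; split => // y /xsectionP /AD[/= D1x']; rewrite notin_setE in D1x.
transitivity (\int[m2]_y \int[m1]_x k (x, y)); first exact: fubini_tonelli k mk k_ge0.
rewrite [RHS]integral_mkcond; apply: eq_integral => y _; rewrite patchE ysectionE.
case: ifPn => [/set_mem D2y|D2y].
  rewrite ge0_integralZl ?h0//; first exact: measurable_ysection.
    apply: measurable_funS ma => //; first by move=> x /ysectionP /AD[].
  by move=> x /ysectionP /AD[/a0].
rewrite (_ : ysection A y = set0) ?integral_set0//.
by apply/seteqP; split => // x /ysectionP /AD[_ /= D2y']; rewrite notin_setE in D2y.
Qed.

End section_integral_swap.

Lemma pos_domE {R : realType} (x : R) : pos_dom R x = (0 < x).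
Proof. by rewrite /pos_dom /= in_itv /= andbT. Qed.

Lemma measurable_pos_dom {R : realType} : measurable (pos_dom R).
Proof. exact: measurable_itv. Qed.
(* Integrals against [lebesgue_measure] ask for measurability in a structure on
   [R] that is convertible to, but does not unify with, the one above; hence
   [Hint Extern] rather than [Hint Resolve]. *)
#[local] Hint Extern 0 => solve [exact: measurable_pos_dom] : core.

Section kernels.
Context {R : realType}.
Notation mu := (@lebesgue_measure R).

Lemma pos_continuous_measurable_fun (k : R -> R) :
  (forall x, 0 < x -> {for x, continuous k}) -> measurable_fun (pos_dom R) k.
Proof.
move=> ck; apply: open_continuous_measurable_fun.
  rewrite (_ : pos_dom R = [set x | x > 0]) ?open_gt//.
  by apply/funext => x; rewrite pos_domE.
by move=> x; rewrite inE pos_domE; exact: ck.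
Qed.

Lemma continuous_1D (x : R) : {for x, continuous (fun y : R => 1 + y)}.
Proof. by apply: continuousD; [exact: cvg_cst | exact: cvg_id]. Qed.

Lemma continuous_inv1D (x : R) : -1 < x -> {for x, continuous (fun y : R => (1 + y)^-1)}.
Proof. by move=> x1; apply: continuousV (continuous_1D x); rewrite gt_eqF//; lra. Qed.

Lemma continuous_inv_mul1D (x : R) : 0 < x ->
  {for x, continuous (fun y : R => (y * (1 + y))^-1)}.
Proof.
move=> x0; apply: continuousV; first by rewrite gt_eqF// mulr_gt0//; lra.
exact: continuousM cvg_id (continuous_1D x).
Qed.

Lemma continuous_ln1D (x : R) : -1 < x -> {for x, continuous (fun y : R => ln (1 + y))}.
Proof.
by move=> x1; apply: continuous_comp (continuous_1D x) _; apply: continuous_ln; lra.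
Qed.

Lemma continuous_ln1Dinv (x : R) : 0 < x ->
  {for x, continuous (fun y : R => ln (1 + y^-1))}.
Proof.
move=> x0; have c1 : {for x, continuous (fun y : R => 1 + y^-1)}.
  by apply: continuousD; [exact: cvg_cst | exact: inv_continuous (lt0r_neq0 x0)].
by apply: continuous_comp c1 _; apply: continuous_ln; rewrite ltr_wpDr// invr_ge0 ltW.
Qed.

Lemma measurable_inv_mul1D : measurable_fun (pos_dom R) (fun x : R => (x * (1 + x))^-1).
Proof. exact: pos_continuous_measurable_fun continuous_inv_mul1D. Qed.

Lemma measurable_inv1D : measurable_fun (pos_dom R) (fun x : R => (1 + x)^-1).
Proof. by apply: pos_continuous_measurable_fun => x x0; apply: continuous_inv1D; lra. Qed.

Lemma is_derive_ln1D (x : R) : -1 < x ->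
  is_derive x 1 (fun y => ln (1 + y)) (1 + x)^-1.
Proof.
move=> x1; have := is_deriveD (is_derive_cst (1 : R) x 1) (is_derive_id x (1 : R)).
rewrite add0r => D1; have x1' : 0 < 1 + x by lra.
by have := is_derive1_comp (is_derive1_ln x1') D1; rewrite mulr1.
Qed.

Lemma is_derive_ln1Dinv (x : R) : 0 < x ->
  is_derive x 1 (fun y => - ln (1 + y^-1)) (x * (1 + x))^-1.
Proof.
move=> x0; have Dinv := is_deriveV (lt0r_neq0 x0) (is_derive_id x (1 : R)).
have := is_deriveD (is_derive_cst (1 : R) x 1) Dinv; rewrite add0r => D1.
have x1 : 0 < 1 + x^-1 by rewrite ltr_wpDr// invr_ge0 ltW.
have := is_deriveN (is_derive1_comp (g := fun y => 1 + y^-1) (is_derive1_ln x1) D1).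
suff -> : (- ((1 + x^-1)^-1 * (- x ^- 2 *: 1)) = (x * (1 + x))^-1) by [].
rewrite scaler1; field; rewrite ?lt0r_neq0 ?mulr_gt0//; lra.
Qed.

Lemma cvgy_inv : (fun x : R => x^-1) x @[x --> +oo] --> 0.
Proof.
apply/(@cvgrVy R R (nbhs +oo) _ (fun x : R => x^-1)).
  by near=> x; rewrite invr_gt0; near: x; exact: nbhs_pinfty_gt.
apply: cvg_trans (cvg_id); apply: near_eq_cvg; near=> x => /=.
by rewrite /unstable.inv_fun invrK.
Unshelve. all: by end_near. Qed.

Lemma integral_inv_mul1D (t : R) : 0 < t ->
  (\int[mu]_(x in `[t, +oo[) ((x * (1 + x))^-1)%:E = (ln (1 + t^-1))%:E)%E.
Proof.
move=> t0; rewrite (@ge0_continuous_FTC2y R _ (fun x => - ln (1 + x^-1)) t 0).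
- by rewrite sub0e EFinN oppeK.
- by move=> x tx; rewrite invr_ge0 mulr_ge0//; lra.
- apply: continuous_in_subspaceT => x; rewrite inE /= in_itv /= andbT => tx.
  by apply: continuous_inv_mul1D; lra.
- have : ln (1 + x^-1) @[x --> +oo] --> ln (1 : R).
    apply: (cvg_comp (fun x => 1 + x^-1)); last exact: continuous_ln ltr01.
    by have := cvgD (cvg_cst (1 : R)) cvgy_inv; rewrite addr0; apply.
  by move=> /cvgN; rewrite ln1 oppr0; apply; exact: _.
- by move=> x tx; apply: ex_derive; apply: is_derive_ln1Dinv; lra.
- apply: cvg_at_right_filter.
  by have := cvgN (continuous_ln1Dinv _ t0); apply; exact: _.
- move=> x; rewrite in_itv /= andbT => tx.
  by rewrite derive1E; apply: derive_val; apply: is_derive_ln1Dinv; lra.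
Qed.

Lemma integral_inv1D (t : R) : 0 < t ->
  (\int[mu]_(x in `]0%R, t[) ((1 + x)^-1)%:E = (ln (1 + t))%:E)%E.
Proof.
move=> t0; have mf : measurable_fun (pos_dom R) (fun x : R => ((1 + x)^-1)%:E).
  by apply/measurable_EFinP; exact: measurable_inv1D.
have subt b : [set` Interval (BRight 0) b] `<=` pos_dom R.
  by move=> x /=; rewrite pos_domE; move: b => [[] y|[]]; rewrite in_itv /= => /andP[].
rewrite integral_itv_bndo_bndc; last exact: measurable_funS measurable_pos_dom (subt _) mf.
rewrite integral_itv_obnd_cbnd; last exact: measurable_funS measurable_pos_dom (subt _) mf.
rewrite (continuous_FTC2 (F := fun x => ln (1 + x)) t0).
- by rewrite addr0 ln1 sube0.
- apply: continuous_in_subspaceT => x; rewrite inE /= in_itv /= => /andP[x0 _].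
  by apply: continuous_inv1D; lra.
- split.
  + move=> x; rewrite in_itv /= => /andP[x0 _].
    by apply: ex_derive; apply: is_derive_ln1D; lra.
  + by apply: cvg_at_right_filter; apply: continuous_ln1D; lra.
  + by apply: cvg_at_left_filter; apply: continuous_ln1D; lra.
- move=> x; rewrite in_itv /= => /andP[x0 _].
  by rewrite derive1E; apply: derive_val; apply: is_derive_ln1D; lra.
Qed.

End kernels.

Section hardy.
Context {R : realType}.
Notation mu := (@lebesgue_measure R).
Implicit Types (f g : R -> R) (x t : R).

Definition head_integral g x : R := Rintegral mu `]0, x] g.
Definition tail_integral g x : R := Rintegral mu `]x, +oo[ g.
Definition hardy_head g x : R := head_integral g x / (x * (1 + x)).
Definition hardy_tail g x : R := tail_integral g x / (1 + x).

Lemma integrable_head_itv g x : L1pos g -> mu.-integrable `]0, x] (EFin \o g).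
Proof.
apply: integrableS => //.
by move=> t /=; rewrite pos_domE in_itv /= => /andP[].
Qed.

Lemma integrable_tail_itv g x : 0 <= x -> L1pos g -> mu.-integrable `]x, +oo[ (EFin \o g).
Proof.
move=> x0; apply: integrableS => //.
by move=> t /=; rewrite pos_domE in_itv /= andbT; exact: le_lt_trans.
Qed.

Lemma head_integralE g x : L1pos g ->
  (head_integral g x)%:E = (\int[mu]_(t in `]0%R, x]) (g t)%:E)%E.
Proof. by move=> Ig; rewrite fineK// integrable_fin_num// integrable_head_itv. Qed.

Lemma tail_integralE g x : 0 <= x -> L1pos g ->
  (tail_integral g x)%:E = (\int[mu]_(t in `]x, +oo[) (g t)%:E)%E.
Proof. by move=> x0 Ig; rewrite fineK// integrable_fin_num// integrable_tail_itv. Qed.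

Lemma Rintegral_pos_dom_split g x : 0 <= x -> L1pos g ->
  Rintegral mu (pos_dom R) g = head_integral g x + tail_integral g x.
Proof.
move=> x0 Ig; have E : pos_dom R = `]0, x] `|` `]x, +oo[.
  by apply: itv_bndbnd_setU; rewrite bnd_simp.
rewrite E Rintegral_setU -?E//.
apply/disj_setPS => t [] /=; rewrite !in_itv /= andbT => /andP[_ tx] xt.
by move: (le_lt_trans tx xt); rewrite ltxx.
Qed.

Lemma hardy_opE f x : 0 < x -> L1pos f ->
  hardy_op f x = hardy_head f x - hardy_tail f x.
Proof.
move=> x0 If; rewrite /hardy_op (Rintegral_pos_dom_split _ _ (ltW x0) If).
rewrite /hardy_head /hardy_tail /head_integral; field.
by rewrite lt0r_neq0 ?lt0r_neq0//; lra.
Qed.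

Section nonneg_integrand.
Variable g : R -> R.
Hypothesis g0 : forall t, 0 < t -> 0 <= g t.

Lemma head_integral_ge0 x : 0 <= head_integral g x.
Proof. by apply: Rintegral_ge0 => t /=; rewrite in_itv /= => /andP[/g0]. Qed.

Lemma tail_integral_ge0 x : 0 <= x -> 0 <= tail_integral g x.
Proof.
move=> x0; apply: Rintegral_ge0 => t /=; rewrite in_itv /= andbT => xt.
by apply: g0; exact: le_lt_trans xt.
Qed.

Lemma hardy_head_ge0 x : 0 < x -> 0 <= hardy_head g x.
Proof.
by move=> x0; rewrite divr_ge0 ?head_integral_ge0// mulr_ge0//; lra.
Qed.

Lemma hardy_tail_ge0 x : 0 < x -> 0 <= hardy_tail g x.
Proof.
by move=> x0; rewrite divr_ge0 ?tail_integral_ge0 ?ltW//; lra.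
Qed.

Lemma nondecreasing_head_integral : L1pos g -> nondecreasing_fun (head_integral g).
Proof.
move=> Ig x y xy; rewrite -lee_fin !head_integralE//.
apply: ge0_subset_integral => //.
- exact: measurable_int _ (integrable_head_itv _ _ Ig).
- by move=> t /=; rewrite in_itv /= lee_fin => /andP[/g0].
- by move=> t /=; rewrite !in_itv /= => /andP[-> /le_trans]; apply.
Qed.

End nonneg_integrand.

Lemma measurable_head_integral g : L1pos g -> measurable_fun setT (head_integral g).
Proof.
move=> Ig; have Ipos : L1pos g^\+ by apply: integrable_funrpos Ig; exact: measurable_pos_dom.
have Ineg : L1pos g^\- by apply: integrable_funrneg Ig; exact: measurable_pos_dom.
have -> : head_integral g = head_integral g^\+ \- head_integral g^\-.
  apply/funext => x /=; rewrite /head_integral -RintegralB//.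
  - by apply: eq_Rintegral => t _; rewrite -[in LHS](funrposBneg g).
  - exact: integrable_head_itv.
  - exact: integrable_head_itv.
apply: measurable_funB; apply: nondecreasing_measurable => //.
  by apply: nondecreasing_head_integral => // t _; exact: funrpos_ge0.
by apply: nondecreasing_head_integral => // t _; exact: funrneg_ge0.
Qed.

Lemma measurable_hardy_head g : L1pos g -> measurable_fun (pos_dom R) (hardy_head g).
Proof.
move=> Ig; apply: measurable_funM.
  exact: measurable_funTS (measurable_head_integral _ Ig).
exact: measurable_inv_mul1D.
Qed.

Lemma measurable_hardy_tail g : L1pos g -> measurable_fun (pos_dom R) (hardy_tail g).
Proof.
move=> Ig; apply: measurable_funM; last exact: measurable_inv1D.
apply: (eq_measurable_fun (fun x => Rintegral mu (pos_dom R) g - head_integral g x)).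
  move=> x; rewrite inE pos_domE => x0.
  by rewrite (Rintegral_pos_dom_split _ _ (ltW x0) Ig) addrC addKr.
apply: measurable_funB => //.
exact: measurable_funTS (measurable_head_integral _ Ig).
Qed.

Lemma measurable_hardy_op f : L1pos f -> measurable_fun (pos_dom R) (hardy_op f).
Proof.
move=> If; apply: measurable_funB; apply: measurable_funM => //.
- by apply: pos_continuous_measurable_fun => x x0; exact: inv_continuous (lt0r_neq0 x0).
- exact: measurable_funTS (measurable_head_integral _ If).
- exact: measurable_inv1D.
Qed.

Lemma integral_hardy_head g : L1pos g -> (forall t, 0 < t -> 0 <= g t) ->
  (\int[mu]_(x in pos_dom R) (hardy_head g x)%:E =
   \int[mu]_(t in pos_dom R) (g t * ln (1 + t^-1))%:E)%E.
Proof.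
move=> Ig g0; pose A := [set z : R * R | 0 < z.2 <= z.1].
have mA : measurable A.
  apply: measurable_bool_set; apply: measurable_and.
    exact: measurable_fun_ltr (measurable_cst _) measurable_snd.
  exact: measurable_fun_ler measurable_snd measurable_fst.
have AD : A `<=` pos_dom R `*` pos_dom R.
  by move=> [x t] /= /andP[t0 tx]; rewrite !pos_domE; split => //; exact: lt_le_trans tx.
pose a x : \bar R := ((x * (1 + x))^-1)%:E.
transitivity (\int[mu]_(x in pos_dom R) (a x * \int[mu]_(t in xsection A x) (g t)%:E))%E.
  apply: eq_integral => x; rewrite inE pos_domE => x0.
  rewrite (_ : xsection A x = `]0, x]%classic); last first.
    by apply/seteqP; split => t; rewrite /xsection /= inE /= in_itv.
  by rewrite -head_integralE// muleC.
rewrite (integral_xsection_swap mu mu _ _ _ _ _ measurable_pos_dom measurable_pos_dom mA AD).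
- apply: eq_integral => t; rewrite inE pos_domE => t0.
  rewrite (_ : ysection A t = `[t, +oo[%classic); last first.
    by apply/seteqP; split => x; rewrite /ysection /A /= inE /= in_itv /= andbT t0.
  by rewrite integral_inv_mul1D.
- by apply/measurable_EFinP; exact: measurable_inv_mul1D.
- exact: measurable_int _ Ig.
- by move=> x; rewrite pos_domE lee_fin => x0; rewrite invr_ge0 mulr_ge0//; lra.
- by move=> t; rewrite pos_domE lee_fin => /g0.
Qed.


Lemma integral_hardy_tail g : L1pos g -> (forall t, 0 < t -> 0 <= g t) ->
  (\int[mu]_(x in pos_dom R) (hardy_tail g x)%:E =
   \int[mu]_(t in pos_dom R) (g t * ln (1 + t))%:E)%E.
Proof.
move=> Ig g0; pose A := [set z : R * R | 0 < z.1 < z.2].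
have mA : measurable A.
  apply: measurable_bool_set; apply: measurable_and.
    exact: measurable_fun_ltr (measurable_cst _) measurable_fst.
  exact: measurable_fun_ltr measurable_fst measurable_snd.
have AD : A `<=` pos_dom R `*` pos_dom R.
  by move=> [x t] /= /andP[x0 xt]; rewrite !pos_domE; split => //; exact: lt_trans xt.
pose a x : \bar R := ((1 + x)^-1)%:E.
transitivity (\int[mu]_(x in pos_dom R) (a x * \int[mu]_(t in xsection A x) (g t)%:E))%E.
  apply: eq_integral => x; rewrite inE pos_domE => x0.
  rewrite (_ : xsection A x = `]x, +oo[%classic); last first.
    by apply/seteqP; split => t; rewrite /xsection /A /= inE /= in_itv /= andbT x0.
  by rewrite -tail_integralE ?ltW// muleC.
rewrite (integral_xsection_swap mu mu _ _ _ _ _ measurable_pos_dom measurable_pos_dom mA AD).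
- apply: eq_integral => t; rewrite inE pos_domE => t0.
  rewrite (_ : ysection A t = `]0, t[%classic); last first.
    by apply/seteqP; split => x; rewrite /ysection /A /= inE /= in_itv.
  by rewrite integral_inv1D.
- by apply/measurable_EFinP; exact: measurable_inv1D.
- exact: measurable_int _ Ig.
- by move=> x; rewrite pos_domE lee_fin => x0; rewrite invr_ge0; lra.
- by move=> t; rewrite pos_domE lee_fin => /g0.
Qed.

Lemma integral_log_weight g : L1pos g -> (forall t, 0 < t -> 0 <= g t) ->
  (\int[mu]_(t in pos_dom R) (g t * log_weight t)%:E =
   \int[mu]_(x in pos_dom R) (hardy_head g x)%:E +
   \int[mu]_(x in pos_dom R) (hardy_tail g x)%:E)%E.
Proof.
move=> Ig g0; have mg : measurable_fun (pos_dom R) g.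
  by apply/measurable_EFinP; exact: measurable_int _ Ig.
rewrite integral_hardy_head// integral_hardy_tail// -ge0_integralD//.
- by apply: eq_integral => t _; rewrite /log_weight mulrDr EFinD.
- move=> t; rewrite pos_domE lee_fin => t0.
  by rewrite mulr_ge0 ?g0// ln_ge0// lerDl invr_ge0 ltW.
- apply/measurable_EFinP; apply: measurable_funM mg _.
  exact: pos_continuous_measurable_fun continuous_ln1Dinv.
- move=> t; rewrite pos_domE lee_fin => t0.
  by rewrite mulr_ge0 ?g0// ln_ge0// lerDl ltW.
- apply/measurable_EFinP; apply: measurable_funM mg _.
  by apply: pos_continuous_measurable_fun => x x0; apply: continuous_ln1D; lra.
Qed.

Lemma norm_hardy_op_le f x : 0 < x -> L1pos f ->
  `|hardy_op f x| <= hardy_head (fun t => `|f t|) x + hardy_tail (fun t => `|f t|) x.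
Proof.
move=> x0 If; rewrite hardy_opE//; apply: le_trans (ler_normB _ _) _.
have k1 : 0 <= (x * (1 + x))^-1 by rewrite invr_ge0 mulr_ge0//; lra.
have k2 : 0 <= (1 + x)^-1 by rewrite invr_ge0; lra.
rewrite !normrM (ger0_norm k1) (ger0_norm k2).
apply: lerD; apply: ler_wpM2r => //; apply: le_normr_Rintegral => //.
  exact: integrable_head_itv.
by apply: integrable_tail_itv => //; exact: ltW.
Qed.

Lemma hardy_op_integrable f : L1pos f ->
  (\int[mu]_(t in pos_dom R) (`|f t| * log_weight t)%:E < +oo)%E ->
  L1pos (hardy_op f).
Proof.
move=> If Hw; have Iabs : L1pos (fun t => `|f t|) := integrable_norm If.
have mH := measurable_hardy_op _ If.
have [mhd mtl] := (measurable_hardy_head _ Iabs, measurable_hardy_tail _ Iabs).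
apply/integrableP; split; first exact/measurable_EFinP.
apply: le_lt_trans Hw; rewrite (integral_log_weight _ Iabs)// -ge0_integralD//.
- apply: ge0_le_integral => //.
  + exact/measurable_EFinP/measurableT_comp.
  + by apply: emeasurable_funD; exact/measurable_EFinP.
  + by move=> x; rewrite pos_domE => x0; rewrite -EFinD lee_fin norm_hardy_op_le.
- by move=> x; rewrite pos_domE => x0; rewrite lee_fin hardy_head_ge0.
- exact/measurable_EFinP.
- by move=> x; rewrite pos_domE => x0; rewrite lee_fin hardy_tail_ge0.
- exact/measurable_EFinP.
Qed.

Section nonneg_hardy.
Variable f : R -> R.
Hypotheses (If : L1pos f) (f0 : forall t, 0 < t -> 0 <= f t).
Let C := Rintegral mu (pos_dom R) f.

Let C_split x : 0 < x -> C = head_integral f x + tail_integral f x.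
Proof. by move=> x0; exact: Rintegral_pos_dom_split (ltW x0) If. Qed.

Lemma hardy_tail_le x : 0 < x -> hardy_tail f x <= C.
Proof.
move=> x0; have := head_integral_ge0 _ f0 x; have := tail_integral_ge0 _ f0 _ (ltW x0).
by rewrite /hardy_tail (C_split _ x0) ler_pdivrMr; nra.
Qed.

Lemma hardy_head_le x : 0 < x -> hardy_head f x <= C / (x * (1 + x)).
Proof.
move=> x0; have := tail_integral_ge0 _ f0 _ (ltW x0).
by rewrite /hardy_head ler_pM2r ?invr_gt0 ?mulr_gt0 ?(C_split _ x0) ?lerDl//; lra.
Qed.

Let sub_itvoy_pos : `]1, +oo[ `<=` pos_dom R.
Proof. by move=> x /=; rewrite pos_domE in_itv /= andbT; exact: lt_trans. Qed.

Let sub_itvoc_pos : `]0, 1] `<=` pos_dom R.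
Proof. by move=> x /=; rewrite pos_domE in_itv /= => /andP[]. Qed.

Lemma integral_hardy_head_itvoy_lty :
  (\int[mu]_(x in `]1%R, +oo[) (hardy_head f x)%:E < +oo)%E.
Proof.
have C0 : 0 <= C by apply: Rintegral_ge0 => t; rewrite pos_domE; exact: f0.
have mk : measurable_fun (`]1, +oo[ : set R) (fun x : R => ((x * (1 + x))^-1)%:E).
  apply/measurable_EFinP; apply: measurable_funS sub_itvoy_pos measurable_inv_mul1D => //.
apply: (@le_lt_trans _ _ (\int[mu]_(x in `]1%R, +oo[) (C%:E * ((x * (1 + x))^-1)%:E))%E).
  apply: ge0_le_integral => //.
  - by move=> x /sub_itvoy_pos; rewrite pos_domE lee_fin; exact: hardy_head_ge0.
  - apply/measurable_EFinP; apply: measurable_funS sub_itvoy_pos _ => //.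
    exact: measurable_hardy_head.
  - exact: emeasurable_funM.
  - move=> x /sub_itvoy_pos; rewrite pos_domE => x0.
    by rewrite -EFinM lee_fin hardy_head_le.
rewrite ge0_integralZl//; last first.
  by move=> x /sub_itvoy_pos; rewrite pos_domE lee_fin => x0; rewrite invr_ge0 mulr_ge0//; lra.
by rewrite integral_itv_obnd_cbnd// integral_inv_mul1D// -EFinM ltry.
Qed.

Hypothesis IH : L1pos (hardy_op f).

Let mH : measurable_fun (pos_dom R) (fun x => (`|hardy_op f x|)%:E).
Proof.
by apply/measurable_EFinP; apply: measurableT_comp => //; exact: measurable_hardy_op.
Qed.

Let normH_lty : (\int[mu]_(x in pos_dom R) (`|hardy_op f x|)%:E < +oo)%E.
Proof. by case/integrableP: IH. Qed.

Lemma integral_hardy_head_itvoc_lty :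
  (\int[mu]_(x in `]0%R, 1%R]) (hardy_head f x)%:E < +oo)%E.
Proof.
have C0 : 0 <= C by apply: Rintegral_ge0 => t; rewrite pos_domE; exact: f0.
apply: (@le_lt_trans _ _
  (\int[mu]_(x in `]0%R, 1%R]) ((`|hardy_op f x|)%:E + C%:E))%E).
  apply: ge0_le_integral => //.
  - by move=> x /sub_itvoc_pos; rewrite pos_domE lee_fin; exact: hardy_head_ge0.
  - apply/measurable_EFinP; apply: measurable_funS sub_itvoc_pos _ => //.
    exact: measurable_hardy_head.
  - by apply: emeasurable_funD => //; exact: measurable_funS _ sub_itvoc_pos mH.
  - move=> x /sub_itvoc_pos; rewrite pos_domE => x0; rewrite -EFinD lee_fin.
    have := hardy_opE _ _ x0 If; have := ler_norm (hardy_op f x).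
    by have := hardy_tail_le _ x0; lra.
rewrite ge0_integralD//; last exact: measurable_funS _ sub_itvoc_pos mH.
apply: lte_add_pinfty.
  by apply: le_lt_trans normH_lty; apply: ge0_subset_integral.
have := @lebesgue_measure_itv R `]0%R, 1%R]; rewrite /= lte01 oppr0 adde0 => mu01.
by rewrite integral_cst// [X in (_ * X)%E](_ : _ = 1%:E) ?mule1 ?ltry.
Qed.

Lemma integral_hardy_head_lty :
  (\int[mu]_(x in pos_dom R) (hardy_head f x)%:E < +oo)%E.
Proof.
have E : pos_dom R = `]0, 1] `|` `]1, +oo[ by apply: itv_bndbnd_setU; rewrite bnd_simp.
rewrite E ge0_integral_setU//.
- exact: lte_add_pinfty integral_hardy_head_itvoc_lty integral_hardy_head_itvoy_lty.
- by rewrite -E; apply/measurable_EFinP; exact: measurable_hardy_head.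
- by move=> x; rewrite -E pos_domE lee_fin; exact: hardy_head_ge0.
- apply/disj_setPS => x [] /=; rewrite !in_itv /= andbT => /andP[_ x1] /lt_le_trans.
  by move=> /(_ _ x1); rewrite ltxx.
Qed.

Lemma integral_hardy_tail_lty :
  (\int[mu]_(x in pos_dom R) (hardy_tail f x)%:E < +oo)%E.
Proof.
have mhd : measurable_fun (pos_dom R) (fun x => (hardy_head f x)%:E).
  apply/measurable_EFinP; exact: measurable_hardy_head.
apply: (@le_lt_trans _ _
  (\int[mu]_(x in pos_dom R) ((`|hardy_op f x|)%:E + (hardy_head f x)%:E))%E).
  apply: ge0_le_integral => //.
  - by move=> x; rewrite pos_domE lee_fin; exact: hardy_tail_ge0.
  - by apply/measurable_EFinP; exact: measurable_hardy_tail.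
  - exact: emeasurable_funD.
  - move=> x; rewrite pos_domE => x0; rewrite -EFinD lee_fin.
    by have := hardy_opE _ _ x0 If; have := ler_norm (- hardy_op f x); rewrite normrN; lra.
rewrite ge0_integralD//.
- exact: lte_add_pinfty normH_lty integral_hardy_head_lty.
- by move=> x; rewrite pos_domE lee_fin; exact: hardy_head_ge0.
Qed.

Lemma integral_log_weight_lty :
  (\int[mu]_(t in pos_dom R) (f t * log_weight t)%:E < +oo)%E.
Proof.
rewrite integral_log_weight//.
exact: lte_add_pinfty integral_hardy_head_lty integral_hardy_tail_lty.
Qed.

End nonneg_hardy.

End hardy.

Theorem theorem2p3 (R : realType) :
  (forall f : R -> R, L1pos f ->
     (\int[@lebesgue_measure R]_(t in pos_dom R) (`|f t| * log_weight t)%:E < +oo)%E ->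
     L1pos (hardy_op f)) /\
  (forall f : R -> R, L1pos f -> (forall t, pos_dom R t -> 0 <= f t) ->
     L1pos (hardy_op f) ->
     (\int[@lebesgue_measure R]_(t in pos_dom R) (f t * log_weight t)%:E < +oo)%E).
Proof.
split; first exact: hardy_op_integrable.
move=> f If f0; apply: integral_log_weight_lty => // t t0.
by apply: f0; rewrite pos_domE.
Qed.
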